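(* Let $A \in \mathbb{C}^{n \times n}$, and fix $A^-\in A\{1\}$ and $A^{GD}\in A\{GD\}$. For $X\in\mathbb{C}^{n\times n}$ the following are equivalent: (i) $X = A^{GD}AA^{-}$; (ii) $XAX=X$, $R(X)=R(A^{GD}A)$, and $N(X)=N(AA^{-})$; (iii) $XAX=X$, $XA=A^{GD}A$, and $AX=AA^{-}$.
   Context: For $A\in\mathbb{C}^{n\times n}$, $ind(A)$ is the smallest nonnegative integer $k$ with $\mathrm{rank}(A^k)=\mathrm{rank}(A^{k+1})$. $A\{1\}$ is the set of matrices $X$ with $AXA=A$. With $k=ind(A)$, $A\{GD\}$ is the set of G-Drazin inverses of $A$: matrices $X$ with $AXA=A$, $XA^{k+1}=A^k$, $A^{k+1}X=A^k$. $R(\cdot)$, $N(\cdot)$ denote range and null space. *)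

From HB Require Import structures.
From mathcomp Require Import all_boot all_order all_algebra.
From mathcomp Require Import complex.
From mathcomp Require Import reals Rstruct.
From Stdlib Require Import Reals.
Set Implicit Arguments. Unset Strict Implicit. Unset Printing Implicit Defensive.
Import Order.TTheory GRing.Theory Num.Theory.
Local Open Scope ring_scope.

Notation CC := (complex R).

(* k-th power of a square matrix (works for every n, including n = 0). *)
Definition mxpow {F : pzRingType} {n : nat} (A : 'M[F]_n) (k : nat) : 'M[F]_n :=
  iter k (mulmx A) 1%:M.

(* ind(A): the smallest k with rank(A^k) = rank(A^(k+1)); such a k always
   exists with k <= n, so searching in [0, n] finds the least one. *)
Definition ind {n : nat} (A : 'M[CC]_n) : nat :=
  find (fun k => \rank (mxpow A k) == \rank (mxpow A k.+1)) (iota 0 n.+1).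

Definition inner_inverse {n : nat} (A X : 'M[CC]_n) : Prop :=
  A *m X *m A = A.

Definition GD_inverse {n : nat} (A X : 'M[CC]_n) : Prop :=
  let k := ind A in
  [/\ A *m X *m A = A,
      X *m mxpow A k.+1 = mxpow A k &
      mxpow A k.+1 *m X = mxpow A k].

Definition in_range {n : nat} (X : 'M[CC]_n) (v : 'cV[CC]_n) : Prop :=
  exists w : 'cV[CC]_n, v = X *m w.
Definition in_null {n : nat} (X : 'M[CC]_n) (v : 'cV[CC]_n) : Prop :=
  X *m v = 0.

From mathcomp Require Import all_boot all_algebra complex reals Rstruct.
From Stdlib Require Import Reals.
Set Implicit Arguments. Unset Strict Implicit. Unset Printing Implicit Defensive.
Import GRing.Theory.
Local Open Scope ring_scope.

(* Writing P := A^GD A and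
   Q := A A^-, both idempotent, (i) gives (iii) by direct computation, and (iii)
   gives back X = XAX = P (AX) = P A A^-.  From (ii), R(X) = R(P) with P
   idempotent forces P X = X, and N(X) = N(Q) together with X A X = X forces
   A X = Q, since v - A X v lies in N(X) for every v. *)

Lemma mx_ext_cV (F : pzRingType) (m n : nat) (P Q : 'M[F]_(m, n)) :
  (forall v : 'cV[F]_n, P *m v = Q *m v) -> P = Q.
Proof.
move=> PQ; apply/matrixP => i j.
have := congr1 (fun M : 'cV[F]_m => M i 0) (PQ (delta_mx j 0)).
by rewrite -!colE !mxE.
Qed.

Section InnerInverse.
Variables (F : pzRingType) (m n : nat) (A : 'M[F]_(m, n)) (G : 'M[F]_(n, m)).
Hypothesis AGA : A *m G *m A = A.

Lemma inner_inverse_mulmx_idem : G *m A *m (G *m A) = G *m A.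
Proof. by rewrite -!mulmxA (mulmxA A G A) AGA. Qed.

Lemma inner_mulmx_eq_of_null (X : 'M[F]_(n, m)) :
  X *m A *m X = X -> (forall v : 'cV[F]_m, X *m v = 0 -> A *m G *m v = 0) ->
  A *m X = A *m G.
Proof.
move=> XAX nullXQ; apply: mx_ext_cV => v.
have : X *m (v - A *m X *m v) = 0 by rewrite mulmxBr !mulmxA XAX subrr.
by move/nullXQ; rewrite mulmxBr !mulmxA AGA => /subr0_eq ->.
Qed.

End InnerInverse.

Lemma idem_mulmx_id_of_range (F : pzRingType) (m n : nat)
    (P : 'M[F]_n) (X : 'M[F]_(n, m)) :
  P *m P = P -> (forall v : 'cV[F]_m, exists w, X *m v = P *m w) -> P *m X = X.
Proof.
move=> PP rangeXP; apply: mx_ext_cV => v.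
have [w Xw] := rangeXP v.
by rewrite -mulmxA Xw mulmxA PP.
Qed.

Section GDProduct.
Variables (F : pzRingType) (m n : nat) (A : 'M[F]_(m, n)) (Am AGD X : 'M[F]_(n, m)).

Lemma GD_product_eqs :
  A *m Am *m A = A -> A *m AGD *m A = A -> X = AGD *m A *m Am ->
  [/\ X *m A *m X = X, X *m A = AGD *m A & A *m X = A *m Am].
Proof.
move=> AAmA AGA ->.
have XA : AGD *m A *m Am *m A = AGD *m A by rewrite -!mulmxA (mulmxA A) AAmA.
split=> //; last by rewrite !mulmxA AGA.
by rewrite XA mulmxA inner_inverse_mulmx_idem.
Qed.

Lemma GD_product_of_eqs :
  [/\ X *m A *m X = X, X *m A = AGD *m A & A *m X = A *m Am] ->
  X = AGD *m A *m Am.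
Proof. by case=> XAX XA AX; rewrite -{1}XAX XA -mulmxA AX mulmxA. Qed.

End GDProduct.

Section RangeNull.
Variables (n : nat) (A Am AGD X : 'M[CC]_n).

Lemma range_null_of_GD_eqs :
  [/\ X *m A *m X = X, X *m A = AGD *m A & A *m X = A *m Am] ->
  [/\ X *m A *m X = X,
      (forall v, in_range X v <-> in_range (AGD *m A) v) &
      (forall v, in_null X v <-> in_null (A *m Am) v)].
Proof.
case=> XAX XA AX; split=> // v; split.
- by case=> w ->; exists (X *m w); rewrite -XA mulmxA XAX.
- by case=> w ->; exists (A *m w); rewrite -XA mulmxA.
- by rewrite /in_null -AX -mulmxA => ->; rewrite mulmx0.
- by rewrite /in_null => Qv; rewrite -XAX -(mulmxA X) AX -mulmxA Qv mulmx0.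
Qed.

Lemma GD_product_of_range_null :
  A *m Am *m A = A -> A *m AGD *m A = A ->
  [/\ X *m A *m X = X,
      (forall v, in_range X v <-> in_range (AGD *m A) v) &
      (forall v, in_null X v <-> in_null (A *m Am) v)] ->
  X = AGD *m A *m Am.
Proof.
move=> AAmA AGA [XAX rangeX nullX].
have PX : AGD *m A *m X = X.
  apply: (idem_mulmx_id_of_range (inner_inverse_mulmx_idem AGA)) => v.
  by apply/rangeX; exists v.
have AX : A *m X = A *m Am.
  by apply: (inner_mulmx_eq_of_null AAmA XAX) => v /nullX.
by rewrite -PX -mulmxA AX mulmxA.
Qed.

End RangeNull.

Theorem theorem2p7 (n : nat) (A Am AGD X : 'M[CC]_n) :
  inner_inverse A Am -> GD_inverse A AGD ->
  [<-> X = AGD *m A *m Am;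
       [/\ X *m A *m X = X,
           (forall v, in_range X v <-> in_range (AGD *m A) v) &
           (forall v, in_null X v <-> in_null (A *m Am) v)];
       [/\ X *m A *m X = X, X *m A = AGD *m A & A *m X = A *m Am]].
Proof.
move=> AAmA [AGA _ _].
tfae.
- by move=> /(GD_product_eqs AAmA AGA)/range_null_of_GD_eqs.
- by move=> /(GD_product_of_range_null AAmA AGA)/(GD_product_eqs AAmA AGA).
- exact: GD_product_of_eqs.
Qed.
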